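(* Let $(S_n)_{n\ge0}$ be defined by $S_0=3$, $S_1=1$, $S_2=3$ and $S_{n+1}=S_n+S_{n-1}+S_{n-2}$ for $n\ge 2$. Let $\alpha,\beta,\gamma$ be the roots of $x^3-x^2-x-1=0$ and $C_n=\alpha^n\beta^n+\alpha^n\gamma^n+\beta^n\gamma^n$ for $n\ge0$. Then for all $n\ge 0$, $$S_nS_{2n}=S_{3n}+S_nC_n-3.$$
   Context: $S_n$ is the generalized Lucas (generalized Tribonacci) sequence. *)

(* complex numbers are modelled by algC (algebraic complex numbers),
   which contain all roots of x^3 - x^2 - x - 1. *)
From mathcomp Require Import all_boot all_order all_algebra all_field.
Set Implicit Arguments. Unset Strict Implicit. Unset Printing Implicit Defensive.

Fixpoint S (n : nat) : nat :=
  match n with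
  | 0 => 3
  | 1 => 1
  | 2 => 3
  | (((m.+1 as k).+1) as j).+1 => S j + S k + S m
  end.

(* By Vieta, the roots a, b, c satisfy a + b + c = 1, ab + ac + bc = -1 and
   abc = 1, so the power sums a^k + b^k + c^k start with 3, 1, 3 and obey the
   Tribonacci recurrence: they are the S_k.  For x = a^n, y = b^n, z = c^n the
   claim is then the symmetric-function identity
   (x + y + z)(x^2 + y^2 + z^2) = x^3 + y^3 + z^3 + (x + y + z)(xy + xz + yz) - 3xyz,
   with xyz = (abc)^n = 1. *)
From mathcomp Require Import all_boot all_order all_algebra all_field.
From mathcomp Require Import ring.
Set Implicit Arguments. Unset Strict Implicit. Unset Printing Implicit Defensive.
Import GRing.Theory.
Local Open Scope ring_scope.

Lemma S_rec (k : nat) : S k.+3 = (S k.+2 + S k.+1 + S k)%N.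
Proof. by []. Qed.

Section TribonacciRoots.

Variable R : comNzRingType.

Lemma tribonacci_ext (u v : nat -> R) :
  (forall k, u k.+3 = u k.+2 + u k.+1 + u k) ->
  (forall k, v k.+3 = v k.+2 + v k.+1 + v k) ->
  u 0%N = v 0%N -> u 1%N = v 1%N -> u 2%N = v 2%N ->
  u =1 v.
Proof.
move=> urec vrec e0 e1 e2 k.
suff [] : [/\ u k = v k, u k.+1 = v k.+1 & u k.+2 = v k.+2] by [].
elim: k => [|k [ek ek1 ek2]]; first by [].
by split=> //; rewrite urec vrec ek ek1 ek2.
Qed.

Lemma tribonacci_expS (x : R) : x ^+ 3 = x ^+ 2 + x + 1 ->
  forall k, x ^+ k.+3 = x ^+ k.+2 + x ^+ k.+1 + x ^+ k.
Proof.
move=> hx k; rewrite -[k.+3]addn3 -[k.+2]addn2 -[k.+1]addn1 !exprD hx; ring.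
Qed.

Lemma cubic_vieta (a b c : R) :
  'X^3 - 'X^2 - 'X - 1 = ('X - a%:P) * ('X - b%:P) * ('X - c%:P) ->
  [/\ a + b + c = 1, a * b + a * c + b * c = -1 & a * b * c = 1].
Proof.
have -> : ('X - a%:P) * ('X - b%:P) * ('X - c%:P) =
    'X^3 - (a + b + c)%:P * 'X^2 + (a * b + a * c + b * c)%:P * 'X
    - (a * b * c)%:P :> {poly R}.
  by rewrite !polyCD !polyCM; ring.
move=> eq_poly.
have coef_eq i := congr1 (fun p : {poly R} => p`_i) eq_poly.
move: (coef_eq 0%N) (coef_eq 1%N) (coef_eq 2%N); rewrite /= !coefE /=.
rewrite !(mulr1, mulr0, subr0, sub0r, addr0, add0r, oppr0) => e3 e2 e1.
by split; [apply: oppr_inj | | apply: oppr_inj].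
Qed.

Lemma tribonacci_root (x y z : R) :
  'X^3 - 'X^2 - 'X - 1 = ('X - x%:P) * ('X - y%:P) * ('X - z%:P) ->
  x ^+ 3 = x ^+ 2 + x + 1.
Proof.
move=> /(congr1 (horner^~ x)); rewrite !hornerE subrr !mul0r.
by move=> root_x; rewrite -[LHS]subr0 -root_x; ring.
Qed.

Lemma S_power_sum (a b c : R) :
  'X^3 - 'X^2 - 'X - 1 = ('X - a%:P) * ('X - b%:P) * ('X - c%:P) ->
  forall k, (S k)%:R = a ^+ k + b ^+ k + c ^+ k.
Proof.
move=> eq_poly; have [e1 e2 _] := cubic_vieta eq_poly.
have ra := tribonacci_expS (tribonacci_root eq_poly).
have rb : b ^+ 3 = b ^+ 2 + b + 1.
  by apply: (tribonacci_root (y := a) (z := c)); rewrite eq_poly [_ * ('X - b%:P)]mulrC.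
have rc : c ^+ 3 = c ^+ 2 + c + 1.
  by apply: (tribonacci_root (y := a) (z := b)); rewrite eq_poly mulrC mulrA.
apply: tribonacci_ext => [k | k | | |].
- by rewrite S_rec !natrD.
- by rewrite ra (tribonacci_expS rb) (tribonacci_expS rc); ring.
- by rewrite /= !expr0; ring.
- by rewrite /= !expr1 e1.
- have -> : a ^+ 2 + b ^+ 2 + c ^+ 2 = (a + b + c) ^+ 2 - 2 * (a * b + a * c + b * c)
    by ring.
  by rewrite /= e1 e2; ring.
Qed.

Lemma sum_mul_sum_sqr (A B C : R) :
  (A + B + C) * (A ^+ 2 + B ^+ 2 + C ^+ 2) =
  A ^+ 3 + B ^+ 3 + C ^+ 3 + (A + B + C) * (A * B + A * C + B * C) - 3 * (A * B * C).
Proof. ring. Qed.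

End TribonacciRoots.

Theorem mainTheorem5 (alpha beta gamma : algC)
  (Hroots : 'X^3 - 'X^2 - 'X - 1 =
            ('X - alpha%:P) * ('X - beta%:P) * ('X - gamma%:P) :> {poly algC})
  (n : nat) :
  let C := alpha ^+ n * beta ^+ n + alpha ^+ n * gamma ^+ n + beta ^+ n * gamma ^+ n in
  (S n)%:R * (S (2 * n))%:R = (S (3 * n))%:R + (S n)%:R * C - 3.
Proof.
move=> C; have [_ _ e3] := cubic_vieta Hroots.
have abc_n : alpha ^+ n * beta ^+ n * gamma ^+ n = 1 by rewrite -!exprMn e3 expr1n.
rewrite !(S_power_sum Hroots) [(2 * n)%N]mulnC [(3 * n)%N]mulnC !exprM.
by rewrite sum_mul_sum_sqr abc_n mulr1.
Qed.
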